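(* Consider a decoder with center-convex decision regions operating in an additive noise channel $\mathbf r=\mathbf s+\sigma_0\boldsymbol\eta$ of arbitrary noise density, described in spherical coordinates by the joint density $f(r,\boldsymbol\theta)$ of the normalized noise amplitude $r=|\boldsymbol\eta|$ and the angles $\boldsymbol\theta$, and let $A=1/\sigma_0$. Then the average symbol error rate satisfies $P_e''(A)\ge0$ for all $A\in[A_1,A_2]$ provided $\partial f(r,\boldsymbol\theta)/\partial r\le0$ for all $\boldsymbol\theta$ and all $r\in[A_1d_{\min},A_2d_{\max}]$.
   Context: Setting: $\mathbf s\in\{\mathbf s_1,\dots,\mathbf s_M\}\subset\mathbb R^n$ with priors $\pi_k$; $\boldsymbol\eta$ is the normalized noise with a fixed distribution independent of $\mathbf s$, and $(r,\boldsymbol\theta)$ are its standard $n$-dimensional spherical coordinates; $f(r,\boldsymbol\theta)$ is differentiable in $r$. The decoder has pairwise disjoint decision regions $\Omega_k$ independent of $A$ (output $\mathbf s_k$ if $\mathbf r\in\Omega_k$, error if in none); $\Omega_k$ is center-convex if for every $\mathbf x\in\Omega_k$ the segment from $\mathbf s_k$ to $\mathbf x$ lies in $\Omega_k$. $P_e=\sum_k\pi_k(1-\Pr[\mathbf r\in\Omega_k\mid\mathbf s=\mathbf s_k])$. $d_{\min}$ ($d_{\max}$) is the minimum over $k$ of the minimum distance (maximum over $k$ of the maximum distance) from $\mathbf s_k$ to the boundary of $\Omega_k$. The noise need not be i.i.d. across dimensions. *)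

From HB Require Import structures.
From mathcomp Require Import all_boot all_order all_algebra.
From mathcomp Require Import all_classical all_reals all_analysis.
Set Implicit Arguments. Unset Strict Implicit. Unset Printing Implicit Defensive.
Import Order.TTheory GRing.Theory Num.Theory.
Import numFieldNormedType.Exports.
Local Open Scope classical_set_scope.
Local Open Scope ring_scope.

Definition enorm {R : realType} {n : nat} (v : 'rV[R]_n) : R :=
  Num.sqrt (\sum_(i < n) (v ord0 i) ^+ 2).

Definition bdry {T : topologicalType} (A : set T) : set T :=
  closure A `\` interior A.

Definition center_convex {R : realType} {n : nat}
  (c : 'rV[R]_n) (Om : set 'rV[R]_n) : Prop :=
  forall x, Om x -> forall t : R, 0 <= t <= 1 -> Om (c + t *: (x - c)).

(* d_min : min over k of the minimal distance from s_k to the boundary of Omega_k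
   (an extended real; +oo if all boundaries are empty). *)
Definition dmin {R : realType} {n M : nat}
  (s : 'I_M -> 'rV[R]_n) (Om : 'I_M -> set 'rV[R]_n) : \bar R :=
  ereal_inf [set e : \bar R | exists k (x : 'rV[R]_n), bdry (Om k) x /\ e = (enorm (x - s k))%:E].

Definition dmax {R : realType} {n M : nat}
  (s : 'I_M -> 'rV[R]_n) (Om : 'I_M -> set 'rV[R]_n) : \bar R :=
  ereal_sup [set e : \bar R | exists k (x : 'rV[R]_n), bdry (Om k) x /\ e = (enorm (x - s k))%:E].

(* Noise eta = rho * u(theta), with (rho,theta) having joint density f w.r.t.
   Lebesgue(d rho) x mu(d theta).  With A = 1/sigma_0, r = s_k + eta / A.
   Probability of correct decision given s = s_k: *)
Definition Pcorrect {R : realType} {n M : nat} {d : measure_display}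
  {Th : measurableType d} (mu : {measure set Th -> \bar R})
  (u : Th -> 'rV[R]_n) (f : R -> Th -> R)
  (s : 'I_M -> 'rV[R]_n) (Om : 'I_M -> set 'rV[R]_n) (k : 'I_M) (A : R) : R :=
  fine (\int[mu]_th
          \int[lebesgue_measure]_(rho in [set rho : R | (0 <= rho)%R /\
                                        Om k (s k + (rho / A)%R *: u th)%R])
             (f rho th)%:E)%E.

Definition Perr {R : realType} {n M : nat} {d : measure_display}
  {Th : measurableType d} (mu : {measure set Th -> \bar R})
  (u : Th -> 'rV[R]_n) (f : R -> Th -> R) (pi : 'I_M -> R)
  (s : 'I_M -> 'rV[R]_n) (Om : 'I_M -> set 'rV[R]_n) (A : R) : R :=
  \sum_(k < M) pi k * (1 - Pcorrect mu u f s Om k A).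

From HB Require Import structures.
From mathcomp Require Import all_boot all_order all_algebra.
From mathcomp Require Import all_classical all_reals all_analysis.
From mathcomp Require Import measurable_realfun.
From mathcomp Require Import ring lra.
Set Implicit Arguments. Unset Strict Implicit. Unset Printing Implicit Defensive.
Import Order.TTheory GRing.Theory Num.Theory.
Import numFieldNormedType.Exports.
Local Open Scope classical_set_scope.
Local Open Scope ring_scope.

(* Fix a direction θ.  By center-convexity the radii ρ >= 0 with
   s_k + (ρ/A) u(θ) ∈ Ω_k form an interval from 0 to A ρ0, where s_k + ρ0 u(θ)
   lies on the boundary of Ω_k, so that d_min <= ρ0 <= d_max.  The conditional
   probability of a correct decision is then J(A) = ∫_0^{A ρ0} f(ρ, θ) dρ, and for
   x < y < z in [A1, A2] its increments over [x, y] and [y, z] are at least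
   (y - x) ρ0 f(y ρ0, θ) and at most (z - y) ρ0 f(y ρ0, θ), because f(., θ)
   decreases on [A1 d_min, A2 d_max].  So J is concave (as a chord inequality);
   integrating over θ and summing over the symbols, P_e satisfies the convex
   chord inequality on [A1, A2], and its one-sided difference quotients, hence
   its second derivative, are then nonnegative. *)

Section OneSidedDerivative.
Variable R : realType.
Implicit Types (P : R -> R) (x l : R).

Lemma derivable1_quotient_cvg P x : derivable P x 1 ->
  cvg ((fun h => h^-1 * (P (h + x) - P x)) @ 0^').
Proof.
move=> dP; have -> : (fun h => h^-1 * (P (h + x) - P x)) =
    (fun h => h^-1 *: ((P \o shift x) (h *: 1) - P x)).
  by apply: funext => h /=; rewrite [h *: 1]mulr1.
exact: dP.
Qed.

Lemma derive1_le_at_right P x l : derivable P x 1 ->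
  (\forall h \near 0^'+, h^-1 * (P (h + x) - P x) <= l) -> derive1 P x <= l.
Proof.
move=> /derivable1_quotient_cvg dP near_l; rewrite /derive1 (cvg_at_rightE _ _ dP).
exact: limr_le (cvgP _ (cvg_dnbhs_at_right dP)) near_l.
Qed.

Lemma derive1_ge_at_right P x l : derivable P x 1 ->
  (\forall h \near 0^'+, l <= h^-1 * (P (h + x) - P x)) -> l <= derive1 P x.
Proof.
move=> /derivable1_quotient_cvg dP near_l; rewrite /derive1 (cvg_at_rightE _ _ dP).
exact: limr_ge (cvgP _ (cvg_dnbhs_at_right dP)) near_l.
Qed.

Lemma derive1_ge_at_left P x l : derivable P x 1 ->
  (\forall h \near 0^'-, l <= h^-1 * (P (h + x) - P x)) -> l <= derive1 P x.
Proof.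
move=> /derivable1_quotient_cvg dP near_l; rewrite /derive1 (cvg_at_leftE _ _ dP).
exact: limr_ge (cvgP _ (cvg_dnbhs_at_left dP)) near_l.
Qed.

End OneSidedDerivative.

Section ThreePointConvexity.
Variable R : realType.

Definition three_point_convex (P : R -> R) (a b : R) : Prop :=
  forall x y z, a <= x -> x < y -> y < z -> z <= b ->
  (z - x) * P y <= (z - y) * P x + (y - x) * P z.

Variables (P : R -> R) (a b : R).
Hypothesis convP : three_point_convex P a b.

Lemma three_point_convex_derive1_le_slope x y : a <= x -> x < y -> y <= b ->
  derivable P x 1 -> derive1 P x <= (P y - P x) / (y - x).
Proof.
move=> ax xy yb dP; apply: derive1_le_at_right => //.
have yx0 : 0 < y - x by rewrite subr_gt0.
near=> h.
have h0 : 0 < h by near: h; exact: nbhs_right_gt.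
have hyx : h < y - x by near: h; exact: nbhs_right_lt.
have := @convP x (h + x) y ax _ _ yb; rewrite ltrDr h0 -ltrBrDr hyx addrK => /(_ isT isT) cvx.
rewrite mulrC ler_pdivrMr // mulrAC ler_pdivlMr //; nra.
Unshelve. all: end_near.
Qed.

Lemma three_point_convex_slope_le_derive1 x y : a <= x -> x < y -> y <= b ->
  derivable P y 1 -> (P y - P x) / (y - x) <= derive1 P y.
Proof.
move=> ax xy yb dP; apply: derive1_ge_at_left => //.
have yx0 : 0 < y - x by rewrite subr_gt0.
near=> h.
have h0 : h < 0 by near: h; exact: nbhs_left_lt.
have hyx : - (y - x) < h by near: h; apply: nbhs_left_gt; rewrite oppr_lt0.
have := @convP x (h + y) y ax _ _ yb; rewrite gtrDr h0 -ltrBlDr => /(_ _ isT) cvx.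
have {}cvx := cvx ltac:(lra).
have -> : h^-1 * (P (h + y) - P y) = (- h)^-1 * (P y - P (h + y)).
  by rewrite invrN mulNr -mulrN opprB.
have hN : 0 < - h by rewrite oppr_gt0.
rewrite ler_pdivrMr // -mulrA mulrC ler_pdivlMr //; nra.
Unshelve. all: end_near.
Qed.

Lemma three_point_convex_derive1_le x y : a <= x -> x < y -> y <= b ->
  derivable P x 1 -> derivable P y 1 -> derive1 P x <= derive1 P y.
Proof.
move=> ax xy yb dPx dPy.
exact: le_trans (three_point_convex_derive1_le_slope ax xy yb dPx)
  (three_point_convex_slope_le_derive1 ax xy yb dPy).
Qed.

Lemma three_point_convex_derive2_ge0 A : a < b -> a <= A <= b ->
  (\forall x \near A, derivable P x 1) -> derivable (derive1 P) A 1 ->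
  0 <= derive1 (derive1 P) A.
Proof.
move=> ab /andP[aA Ab] dP_near dP'.
have dP := nbhs_singleton dP_near.
have dP_shift : \forall h \near 0, derivable P (h + A) 1.
  by move/nbhs0P: dP_near; apply: filterS => h; rewrite addrC.
have [Ab'|bA] := ltP A b.
  apply: derive1_ge_at_right => //; near=> h.
  have h0 : 0 < h by near: h; exact: nbhs_right_gt.
  apply: mulr_ge0; first by rewrite invr_ge0 ltW.
  rewrite subr_ge0; apply: three_point_convex_derive1_le => //.
  - by rewrite ltrDr.
  - by rewrite -lerBrDr; near: h; apply: nbhs_right_le; rewrite subr_gt0.
  - by near: h; exact: cvg_within dP_shift.
have aA' : a < A := lt_le_trans ab bA.
apply: derive1_ge_at_left => //; near=> h.
have h0 : h < 0 by near: h; exact: nbhs_left_lt.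
apply: mulr_le0; first by rewrite invr_le0 ltW.
rewrite subr_le0; apply: three_point_convex_derive1_le => //.
- by rewrite -lerBlDr; near: h; apply: nbhs_left_ge; rewrite subr_lt0.
- by rewrite gtrDr.
- by near: h; exact: cvg_within dP_shift.
Unshelve. all: end_near.
Qed.

End ThreePointConvexity.

Lemma three_point_convex_sum {R : realType} {I : finType} (w : I -> R)
    (P : I -> R -> R) (a b : R) :
  (forall i, 0 <= w i) -> (forall i, three_point_convex (P i) a b) ->
  three_point_convex (fun A => \sum_i w i * P i A) a b.
Proof.
move=> w_ge0 convP x y z ax xy yz zb; rewrite !mulr_sumr -big_split /=.
apply: ler_sum => i _; rewrite mulrCA.
have -> : (z - y) * (w i * P i x) + (y - x) * (w i * P i z) =
    w i * ((z - y) * P i x + (y - x) * P i z) by ring.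
by apply: ler_wpM2l; [exact: w_ge0 | exact: convP].
Qed.

Lemma three_point_convex_one_minus {R : realType} (P : R -> R) (a b : R) :
  (forall x y z, a <= x -> x < y -> y < z -> z <= b ->
    (z - y) * P x + (y - x) * P z <= (z - x) * P y) ->
  three_point_convex (fun A => 1 - P A) a b.
Proof.
move=> concP x y z ax xy yz zb; rewrite -subr_ge0.
have -> : (z - y) * (1 - P x) + (y - x) * (1 - P z) - (z - x) * (1 - P y) =
    (z - x) * P y - ((z - y) * P x + (y - x) * P z) by ring.
by rewrite subr_ge0 concP.
Qed.

Section IntervalIntegral.
Variable R : realType.
Local Notation leb := (@lebesgue_measure R).
Implicit Types (g : R -> R) (a c k : R) (l r : bool).

Lemma lebesgue_measure_itv_le l r a c : a <= c ->
  leb [set` Interval (BSide l a) (BSide r c)] = (c - a)%:E.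
Proof.
move=> ac; rewrite lebesgue_measure_itv /= lte_fin.
case: ltP => [_|ca]; first by rewrite EFinB.
have -> : c = a by apply: le_anti; rewrite ca ac.
by rewrite subrr.
Qed.

Lemma integral_itv_cst l r a c k : a <= c ->
  (\int[leb]_(x in [set` Interval (BSide l a) (BSide r c)]) k%:E = (k * (c - a))%:E)%E.
Proof.
move=> ac; rewrite integral_cst; last exact: measurable_itv.
by rewrite EFinM; congr (_ * _)%E; exact: lebesgue_measure_itv_le.
Qed.

Lemma integral_itv_ge_cst l r g a c k : measurable_fun setT g -> a <= c -> 0 <= k ->
  (forall x, x \in Interval (BSide l a) (BSide r c) -> k <= g x) ->
  ((k * (c - a))%:E <= \int[leb]_(x in [set` Interval (BSide l a) (BSide r c)]) (g x)%:E)%E.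
Proof.
move=> mg ac k0 kg; rewrite -(integral_itv_cst l r k ac).
apply: ge0_le_integral => //.
by apply/measurable_EFinP; exact: measurable_funS measurableT _ mg.
Qed.

Lemma integral_itv_le_cst l r g a c k : measurable_fun setT g -> a <= c ->
  (forall x, 0 <= g x) ->
  (forall x, x \in Interval (BSide l a) (BSide r c) -> g x <= k) ->
  (\int[leb]_(x in [set` Interval (BSide l a) (BSide r c)]) (g x)%:E <= (k * (c - a))%:E)%E.
Proof.
move=> mg ac g0 gk; rewrite -(integral_itv_cst l r k ac).
apply: ge0_le_integral => //; first by move=> x _; rewrite lee_fin.
by apply/measurable_EFinP; exact: measurable_funS measurableT _ mg.
Qed.

End IntervalIntegral.

(* The values at x, y and z are a, a + b and a + b + e. *)
Lemma lee_three_point_increments {R : realType} (a b e : \bar R) (x y z beta : R) :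
  (0 <= a)%E -> (0 <= b)%E -> (0 <= e)%E -> x < y -> y < z ->
  (((y - x) * beta)%:E <= b)%E -> (e <= ((z - y) * beta)%:E)%E ->
  ((z - y)%:E * a + (y - x)%:E * (a + b + e) <= (z - x)%:E * (a + b))%E.
Proof.
move=> a0 b0 e0 xy yz lb ub.
have zx : (0 < (z - x)%:E)%E by rewrite lte_fin; lra.
case: a a0 => [a| |] // a0; case: b b0 lb => [b| |] // b0 lb;
  try by apply: le_trans (leey _) _; rewrite ?addye ?addey // gt0_muley.
case: e e0 ub => [e| |] //= e0 ub.
rewrite -!EFinD -!EFinM lee_fin.
rewrite !lee_fin in a0 b0 e0 lb ub.
have : (y - x) * e <= (z - y) * b.
  apply: le_trans (_ : (y - x) * ((z - y) * beta) <= _).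
    by apply: ler_wpM2l => //; lra.
  by rewrite mulrCA; apply: ler_wpM2l => //; lra.
nra.
Qed.

Lemma ge0_integral_three_point_concave {d} {T : measurableType d} {R : realType}
    (mu : {measure set T -> \bar R}) (Fx Fy Fz : T -> \bar R) (x y z : R) :
  x <= y -> y <= z ->
  (forall t, 0 <= Fx t)%E -> (forall t, 0 <= Fy t)%E -> (forall t, 0 <= Fz t)%E ->
  measurable_fun setT Fx -> measurable_fun setT Fy -> measurable_fun setT Fz ->
  (forall t, (z - y)%:E * Fx t + (y - x)%:E * Fz t <= (z - x)%:E * Fy t)%E ->
  ((z - y)%:E * \int[mu]_t Fx t + (y - x)%:E * \int[mu]_t Fz t
     <= (z - x)%:E * \int[mu]_t Fy t)%E.
Proof.
move=> xy yz Fx0 Fy0 Fz0 mFx mFy mFz concF.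
have [zy yx zx] : [/\ 0 <= z - y, 0 <= y - x & 0 <= z - x] by split; lra.
rewrite -!ge0_integralZl ?lee_fin // -ge0_integralD //.
- apply: ge0_le_integral => //.
  + by move=> t _; rewrite adde_ge0 // mule_ge0 ?lee_fin.
  + by apply: emeasurable_funD; exact: measurable_funeM.
  + exact: measurable_funeM.
- by move=> t _; rewrite mule_ge0 ?lee_fin.
- exact: measurable_funeM.
- by move=> t _; rewrite mule_ge0 ?lee_fin.
- exact: measurable_funeM.
Qed.

Lemma measurable_fun_section_integral {R : realType} {d} {Th : measurableType d}
    (F : R -> Th -> R) (P : set (R * Th)) :
  (forall rho th, 0 <= F rho th) -> measurable_fun setT (fun p : R * Th => F p.1 p.2) ->
  measurable P ->
  measurable_fun setT
    (fun th => \int[lebesgue_measure]_(rho in [set rho | P (rho, th)]) (F rho th)%:E)%E.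
Proof.
move=> F_ge0 mF mP; pose G := (fun p : R * Th => (F p.1 p.2)%:E) \_ P.
have -> : (fun th => \int[lebesgue_measure]_(rho in [set rho | P (rho, th)]) (F rho th)%:E)%E
    = fubini_G lebesgue_measure G.
  apply: funext => th; rewrite /fubini_G [LHS]integral_mkcond.
  apply: eq_integral => rho _; rewrite /patch /G /=.
  by congr (if _ then _ else _); apply/idP/idP; rewrite !inE.
apply: measurable_fun_fubini_tonelli_G.
  apply/measurable_restrict => //; apply/measurable_EFinP.
  exact: measurable_funS measurableT _ mF.
by move=> p; apply: erestrict_ge0 => q _; rewrite lee_fin.
Qed.

Section RadialIntegral.
Variable R : realType.
Local Notation leb := (@lebesgue_measure R).

(* [nonneg_dilate T A] is A (T ∩ [0, +oo[); for T the ray section of Ω_k in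
   direction θ it is the set of noise amplitudes for which the decoder is
   correct at A = 1/σ_0. *)
Definition nonneg_dilate (T : set R) (A : R) : set R :=
  [set rho | 0 <= rho /\ T (rho / A)].

Variables (g : R -> R) (T : set R).
Hypothesis g_ge0 : forall r, 0 <= g r.
Hypothesis mg : measurable_fun setT g.
Hypothesis T_down : forall t t', 0 <= t' <= t -> T t -> T t'.
Hypothesis mT : forall A, 0 < A -> measurable (nonneg_dilate T A).

Local Notation J A := (\int[leb]_(rho in nonneg_dilate T A) (g rho)%:E)%E.

Lemma nonneg_dilate_subset a b : 0 < a -> a <= b ->
  nonneg_dilate T a `<=` nonneg_dilate T b.
Proof.
move=> a0 ab r [r0 Tr]; split=> //; apply: T_down Tr.
rewrite divr_ge0 ?(ltW (lt_le_trans a0 ab)) //=.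
by apply: ler_wpM2l => //; rewrite lef_pV2 // posrE (lt_le_trans a0 ab).
Qed.

Lemma integral_nonneg_dilate_split a b : 0 < a -> a <= b ->
  J b = (J a + \int[leb]_(rho in nonneg_dilate T b `\` nonneg_dilate T a) (g rho)%:E)%E.
Proof.
move=> a0 ab; have b0 := lt_le_trans a0 ab.
rewrite -{1}(setDUK (nonneg_dilate_subset a0 ab)) ge0_integral_setU //.
- exact: mT.
- exact: measurableD (mT b0) (mT a0).
- by apply/measurable_EFinP; exact: measurable_funS measurableT _ mg.
- by move=> r _; rewrite lee_fin.
- by rewrite disj_set2E setDIK.
Qed.

Section KnownRadius.
Variable rho0 : R.
Hypothesis rho0_ge0 : 0 <= rho0.
Hypothesis T_le : forall t, 0 <= t -> T t -> t <= rho0.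
Hypothesis T_lt : forall t, 0 <= t < rho0 -> T t.

Lemma nonneg_dilateD_subset_itv a b : 0 < a -> 0 < b ->
  nonneg_dilate T b `\` nonneg_dilate T a `<=` [set` `[a * rho0, b * rho0]].
Proof.
move=> a0 b0 r [[r0 Tr] NSr]; rewrite /= in_itv /=.
have := T_le (divr_ge0 r0 (ltW b0)) Tr; rewrite ler_pdivrMr // mulrC => -> /[!andbT].
rewrite leNgt; apply/negP => ra; apply: NSr; split => //.
by apply: T_lt; rewrite divr_ge0 ?(ltW a0) //= ltr_pdivrMr // mulrC.
Qed.

Lemma itv_subset_nonneg_dilateD a b : 0 < a -> 0 < b ->
  [set` `]a * rho0, b * rho0[] `<=` nonneg_dilate T b `\` nonneg_dilate T a.
Proof.
move=> a0 b0 r; rewrite /= in_itv /= => /andP[ar rb].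
have r0 : 0 <= r by apply: le_trans (ltW ar); rewrite mulr_ge0 // ltW.
split.
  split => //; apply: T_lt; rewrite divr_ge0 ?(ltW b0) //=.
  by rewrite ltr_pdivrMr // mulrC.
case=> _ /(T_le (divr_ge0 r0 (ltW a0))); rewrite ler_pdivrMr // mulrC; lra.
Qed.

Lemma radial_integral_three_point_concave_at_radius x y z : 0 < x -> x < y -> y < z ->
  (forall r1 r2, x * rho0 <= r1 -> r1 <= r2 -> r2 <= z * rho0 -> g r2 <= g r1) ->
  ((z - y)%:E * J x + (y - x)%:E * J z <= (z - x)%:E * J y)%E.
Proof.
move=> x0 xy yz g_nonincr.
have y0 := lt_trans x0 xy; have z0 := lt_trans y0 yz.
have mgE : forall D, measurable D -> measurable_fun D (fun r => (g r)%:E).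
  by move=> D mD; apply/measurable_EFinP; exact: measurable_funS measurableT _ mg.
rewrite (integral_nonneg_dilate_split y0 (ltW yz)).
rewrite (integral_nonneg_dilate_split x0 (ltW xy)).
apply: (@lee_three_point_increments _ _ _ _ x y z (g (y * rho0) * rho0)) => //.
1-3: by apply: integral_ge0 => r _; rewrite lee_fin.
- apply: (@le_trans _ _ (\int[leb]_(r in [set` `]x * rho0, y * rho0[%R]) (g r)%:E)%E).
    have -> : (y - x) * (g (y * rho0) * rho0) = g (y * rho0) * (y * rho0 - x * rho0).
      by ring.
    apply: integral_itv_ge_cst => //; first by rewrite ler_wpM2r // ltW.
    move=> r; rewrite in_itv /= => /andP[xr ry].
    by apply: g_nonincr (ltW xr) (ltW ry) _; rewrite ler_wpM2r // ltW.
  apply: ge0_subset_integral; last exact: itv_subset_nonneg_dilateD.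
  + exact: measurable_itv.
  + exact: measurableD (mT y0) (mT x0).
  + exact: mgE (measurableD (mT y0) (mT x0)).
  + by move=> r _; rewrite lee_fin.
- apply: (@le_trans _ _ (\int[leb]_(r in [set` `[y * rho0, z * rho0]%R]) (g r)%:E)%E).
    apply: ge0_subset_integral; last exact: nonneg_dilateD_subset_itv.
    + exact: measurableD (mT z0) (mT y0).
    + exact: measurable_itv.
    + exact: mgE (measurable_itv _).
    + by move=> r _; rewrite lee_fin.
  have -> : (z - y) * (g (y * rho0) * rho0) = g (y * rho0) * (z * rho0 - y * rho0).
    by ring.
  apply: integral_itv_le_cst => //; first by rewrite ler_wpM2r // ltW.
  move=> r; rewrite in_itv /= => /andP[yr rz].
  by apply: g_nonincr _ yr rz; rewrite ler_wpM2r // ltW.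
Qed.

End KnownRadius.

Lemma downward_closed_radius : (exists t, 0 <= t /\ T t) ->
  (exists M, forall t, 0 <= t -> T t -> t <= M) ->
  exists rho0, [/\ 0 <= rho0, (forall t, 0 <= t -> T t -> t <= rho0)
                   & (forall t, 0 <= t < rho0 -> T t)].
Proof.
move=> [t [t0 Tt]] [M ubM].
pose E := [set t | 0 <= t /\ T t].
have supE : has_sup E by split; [exists t | exists M => r []; apply: ubM].
have T_le r : 0 <= r -> T r -> r <= sup E by move=> r0 Tr; exact: sup_upper_bound.
exists (sup E); split => //; first exact: le_trans t0 (T_le t t0 Tt).
move=> r /andP[r0 r_lt]; have : 0 < sup E - r by rewrite subr_gt0.
move=> /sup_adherent/(_ supE) [e [_ Te] re].
by apply: T_down Te; rewrite r0 /=; move: re; lra.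
Qed.

Lemma radial_integral_three_point_concave x y z : 0 < x -> x < y -> y < z ->
  (forall rho0, 0 < rho0 -> (forall t, 0 <= t -> T t -> t <= rho0) ->
     (forall t, 0 <= t < rho0 -> T t) ->
     forall r1 r2, x * rho0 <= r1 -> r1 <= r2 -> r2 <= z * rho0 -> g r2 <= g r1) ->
  ((z - y)%:E * J x + (y - x)%:E * J z <= (z - x)%:E * J y)%E.
Proof.
move=> x0 xy yz g_nonincr.
have y0 := lt_trans x0 xy; have z0 := lt_trans y0 yz.
have [T_inhab|T_empty] := pselect (exists t, 0 <= t /\ T t); last first.
  have S0 A : 0 < A -> nonneg_dilate T A = set0.
    move=> A0; apply/seteqP; split => // r [r0 Tr]; apply: T_empty.
    by exists (r / A); rewrite divr_ge0 // ltW.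
  by rewrite !S0 // !integral_set0 !mule0 adde0.
have [T_bdd|T_unbdd] := pselect (exists M, forall t, 0 <= t -> T t -> t <= M).
  have [rho0 [rho0_ge0 T_le T_lt]] := downward_closed_radius T_inhab T_bdd.
  apply: (radial_integral_three_point_concave_at_radius rho0_ge0 T_le T_lt) => //.
  have [-> r1 r2|rho0_neq0] := eqVneq rho0 0.
    by rewrite !mulr0 => r10 r12 r20; have -> : r2 = r1 by lra.
  by apply: g_nonincr => //; rewrite lt_def rho0_neq0.
have T_nonneg t : 0 <= t -> T t.
  move=> t0; apply: contra_notP T_unbdd => NTt; exists t => t' t'0 Tt'.
  by rewrite leNgt; apply/negP => tt'; apply: NTt; apply: T_down Tt'; rewrite t0 ltW.
have S_nonneg A : 0 < A -> nonneg_dilate T A = [set r | 0 <= r].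
  move=> A0; apply/seteqP; split => [r [] //|r r0]; split => //.
  by apply: T_nonneg; rewrite divr_ge0 // ltW.
rewrite !S_nonneg // -ge0_muleDl ?lee_fin; [|lra|lra].
by rewrite -EFinD subrKA.
Qed.

End RadialIntegral.

Section Rays.
Variables (R : realType) (n : nat).
Implicit Types (c v : 'rV[R]_n) (Om : set 'rV[R]_n).

Lemma enormZ (k : R) v : 0 <= k -> enorm (k *: v) = k * enorm v.
Proof.
move=> k0; rewrite /enorm.
under eq_bigr do rewrite mxE exprMn.
by rewrite -mulr_sumr sqrtrM ?sqr_ge0 // sqrtr_sqr ger0_norm.
Qed.

Definition ray_set c v Om : set R := [set t | Om (c + t *: v)].

Lemma center_convex_ray_set c v Om t t' : center_convex c Om ->
  0 <= t' <= t -> ray_set c v Om t -> ray_set c v Om t'.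
Proof.
move=> ccOm /andP[t'0 t't] Ot.
have [t0|t_neq0] := eqVneq t 0.
  by have -> : t' = t by apply: le_anti; rewrite t't t0 t'0.
have t_gt0 : 0 < t by rewrite lt_def t_neq0 (le_trans t'0 t't).
have t't_le1 : t' / t <= 1 by rewrite ler_pdivrMr ?mul1r.
have := ccOm _ Ot (t' / t); rewrite divr_ge0 ?(ltW t_gt0) // t't_le1 => /(_ isT).
by rewrite [c + t *: v]addrC addrK scalerA divfK.
Qed.

Lemma ray_exit_in_bdry c v Om rho0 : 0 < rho0 ->
  (forall t, 0 <= t -> ray_set c v Om t -> t <= rho0) ->
  (forall t, 0 <= t < rho0 -> ray_set c v Om t) -> bdry Om (c + rho0 *: v).
Proof.
move=> rho0_gt0 T_le T_lt.
have ray_cont : continuous (fun t : R => c + t *: v).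
  by move=> t; apply: cvgD; [exact: cvg_cst | exact: scalel_continuous].
split.
  move=> B /(ray_cont rho0)/nbhs_ballP [e /= e0 ball_B].
  have [h [h_gt0 he hrho0]] : exists h, [/\ 0 < h, h < e & h < rho0].
    exists (Num.min e rho0 / 2).
    have : 0 < Num.min e rho0 by rewrite lt_min e0.
    have : Num.min e rho0 <= e by rewrite ge_min lexx.
    have : Num.min e rho0 <= rho0 by rewrite ge_min lexx orbT.
    by move: (Num.min e rho0) => m *; split; lra.
  exists (c + (rho0 - h) *: v); split.
    by apply: T_lt; apply/andP; split; lra.
  by apply: ball_B; rewrite /ball /= opprB addrC subrK ger0_norm // ltW.
move=> /(ray_cont rho0)/nbhs_ballP [e /= e0 ball_Om].
have : ball rho0 e (rho0 + e / 2).
  by rewrite /ball /= opprD addrA subrr sub0r normrN ger0_norm; lra.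
move=> /ball_Om /= Om_out.
have := T_le (rho0 + e / 2) ltac:(lra) Om_out; lra.
Qed.

End Rays.

Section Decoder.
Variables (R : realType) (n M : nat) (d : measure_display) (Th : measurableType d).
Variables (mu : {measure set Th -> \bar R}) (u : Th -> 'rV[R]_n) (f : R -> Th -> R).
Variables (s : 'I_M -> 'rV[R]_n) (Om : 'I_M -> set 'rV[R]_n) (A1 A2 : R).
Hypothesis u_unit : forall th, enorm (u th) = 1.
Hypothesis f_ge0 : forall rho th, 0 <= f rho th.
Hypothesis mf : measurable_fun setT (fun p : R * Th => f p.1 p.2).
Hypothesis f_total : (\int[mu]_th \int[lebesgue_measure]_(rho in [set rho : R | (0 <= rho)%R])
  (f rho th)%:E = 1)%E.
Hypothesis f_derivable : forall th rho, 0 < rho -> derivable (fun r => f r th) rho 1.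
Hypothesis mOm : forall k, measurable [set p : R * Th | Om k (s k + p.1 *: u p.2)].
Hypothesis Om_cc : forall k, center_convex (s k) (Om k).
Hypothesis A1_gt0 : 0 < A1.
Hypothesis f_nonincr : forall th r, 0 < r ->
  (A1%:E * dmin s Om <= r%:E <= A2%:E * dmax s Om)%E -> derive1 (fun rho => f rho th) r <= 0.

Local Notation ray k th := (ray_set (s k) (u th) (Om k)).

(* The conditional probability, given θ, of a correct decision on s_k at A. *)
Definition radial_integral k A th :=
  (\int[lebesgue_measure]_(rho in nonneg_dilate (ray k th) A) (f rho th)%:E)%E.

Lemma measurable_density_section th : measurable_fun setT (fun r => f r th).
Proof. exact: measurableT_comp mf (pair2_measurable th). Qed.

Lemma radial_integral_ge0 k A th : (0 <= radial_integral k A th)%E.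
Proof. by apply: integral_ge0 => r _; rewrite lee_fin. Qed.

Lemma measurable_nonneg_dilate_region k A : 0 < A ->
  measurable [set p : R * Th | 0 <= p.1 /\ Om k (s k + (p.1 / A) *: u p.2)].
Proof.
move=> A_gt0.
have -> : [set p : R * Th | 0 <= p.1 /\ Om k (s k + (p.1 / A) *: u p.2)] =
    ([set` `[0%R, +oo[%R] `*` setT) `&`
    ((fun p : R * Th => (p.1 / A, p.2)) @^-1` [set p | Om k (s k + p.1 *: u p.2)]).
  apply/seteqP; split => p /=.
    by case=> p0 Op; split => //; split => //=; rewrite in_itv /= p0.
  by case=> -[/=]; rewrite in_itv /= andbT => p0 _ Op.
apply: measurableI; first by apply: measurableX => //; exact: measurable_itv.
have mscale : measurable_fun setT (fun p : R * Th => (p.1 / A, p.2)).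
  apply: measurable_fun_pair; last exact: measurable_snd.
  by apply: measurable_funM; [exact: measurable_fst | exact: measurable_cst].
by rewrite -[X in measurable X]setTI; exact: mscale measurableT _ (mOm k).
Qed.

Lemma measurable_nonneg_dilate_ray k th A : 0 < A ->
  measurable (nonneg_dilate (ray k th) A).
Proof.
move=> A_gt0; have := measurable_nonneg_dilate_region k A_gt0.
by move=> /(pair2_measurable th measurableT); rewrite setTI.
Qed.

Lemma radius_between_dmin_dmax k th rho0 : 0 < rho0 ->
  (forall t, 0 <= t -> ray k th t -> t <= rho0) -> (forall t, 0 <= t < rho0 -> ray k th t) ->
  (dmin s Om <= rho0%:E /\ rho0%:E <= dmax s Om)%E.
Proof.
move=> rho0_gt0 T_le T_lt.
have exit_bdry := ray_exit_in_bdry rho0_gt0 T_le T_lt.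
have exit_dist : enorm (s k + rho0 *: u th - s k) = rho0.
  by rewrite [s k + _]addrC addrK enormZ ?u_unit ?mulr1 // ltW.
split; [apply: ereal_inf_lbound | apply: ereal_sup_ubound];
  by exists k, (s k + rho0 *: u th); rewrite exit_dist.
Qed.

Lemma density_nonincreasing_on_radius k th x z rho0 : A1 <= x -> z <= A2 -> 0 < rho0 ->
  (forall t, 0 <= t -> ray k th t -> t <= rho0) -> (forall t, 0 <= t < rho0 -> ray k th t) ->
  forall r1 r2, x * rho0 <= r1 -> r1 <= r2 -> r2 <= z * rho0 -> f r2 th <= f r1 th.
Proof.
move=> A1x zA2 rho0_gt0 T_le T_lt r1 r2 r1x r12 r2z.
have [dmin_le le_dmax] := radius_between_dmin_dmax rho0_gt0 T_le T_lt.
have r1_gt0 : 0 < r1.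
  by apply: lt_le_trans r1x; rewrite mulr_gt0 // (lt_le_trans A1_gt0).
have f'_le0 r : r \in `]r1, r2[ -> derive1 (fun rho => f rho th) r <= 0.
  rewrite in_itv /= => /andP[r1r rr2]; have r_gt0 := lt_trans r1_gt0 r1r.
  apply: f_nonincr => //.
  have A1r : A1 * rho0 <= r.
    by apply: le_trans (le_trans _ r1x) (ltW r1r); rewrite ler_wpM2r // ltW.
  have rA2 : r <= A2 * rho0.
    by apply: le_trans (le_trans (ltW rr2) r2z) _; rewrite ler_wpM2r // ltW.
  apply/andP; split.
    apply: le_trans (lee_wpmul2l _ dmin_le) _; first by rewrite lee_fin ltW.
    by rewrite -EFinM lee_fin.
  have A2_gt0 : 0 < A2 by rewrite -(pmulr_lgt0 _ rho0_gt0) (lt_le_trans r_gt0).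
  apply: le_trans (lee_wpmul2l _ le_dmax); last by rewrite lee_fin ltW.
  by rewrite -EFinM lee_fin.
have df r : r \in `]r1, r2[ -> derivable (fun rho => f rho th) r 1.
  by rewrite in_itv /= => /andP[r1r _]; exact/f_derivable/(lt_trans r1_gt0).
have cf : {within `[r1, r2], continuous (fun rho => f rho th)}.
  apply: derivable_within_continuous => r; rewrite in_itv /= => /andP[r1r _].
  exact/f_derivable/(lt_le_trans r1_gt0).
by apply: (ler0_derive1_le_cc df f'_le0 cf); rewrite ?in_itv /= ?lexx ?r12.
Qed.

Lemma measurable_radial_integral k A : 0 < A ->
  measurable_fun setT (radial_integral k A).
Proof.
move=> A_gt0.
exact: measurable_fun_section_integral f_ge0 mf (measurable_nonneg_dilate_region k A_gt0).
Qed.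

Lemma Pcorrect_integral_fin_num k A : 0 < A ->
  (\int[mu]_th radial_integral k A th)%E \is a fin_num.
Proof.
move=> A_gt0; rewrite ge0_fin_numE; last first.
  by apply: integral_ge0 => th _; exact: radial_integral_ge0.
apply: le_lt_trans (ltry 1); rewrite -f_total.
have m0 : measurable [set rho : R | 0 <= rho].
  have -> : [set rho : R | 0 <= rho] = [set` `[0%R, +oo[%R].
    by apply/seteqP; split => r /=; rewrite in_itv /= andbT.
  exact: measurable_itv.
apply: ge0_le_integral => //.
- by move=> th _; exact: radial_integral_ge0.
- exact: measurable_radial_integral.
- apply: (@measurable_fun_section_integral _ _ _ _ [set p | 0 <= p.1]) => //.
  by have := measurable_fst (T2 := Th) measurableT _ m0; rewrite setTI.
move=> th _; apply: ge0_subset_integral => //.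
- exact: measurable_nonneg_dilate_ray.
- apply/measurable_EFinP.
  exact: measurable_funS measurableT _ (measurable_density_section th).
- by move=> r _; rewrite lee_fin.
- by move=> r [].
Qed.

Lemma Pcorrect_three_point_concave k x y z : A1 <= x -> x < y -> y < z -> z <= A2 ->
  (z - y) * Pcorrect mu u f s Om k x + (y - x) * Pcorrect mu u f s Om k z <=
  (z - x) * Pcorrect mu u f s Om k y.
Proof.
move=> A1x xy yz zA2.
have x0 : 0 < x := lt_le_trans A1_gt0 A1x.
have y0 := lt_trans x0 xy; have z0 := lt_trans y0 yz.
have concJ th : ((z - y)%:E * radial_integral k x th + (y - x)%:E * radial_integral k z th
    <= (z - x)%:E * radial_integral k y th)%E.
  apply: (@radial_integral_three_point_concave _ (f^~ th) (ray k th)) => //.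
  - exact: measurable_density_section.
  - by move=> t t'; exact: center_convex_ray_set.
  - by move=> B; exact: measurable_nonneg_dilate_ray.
  - move=> rho0 rho0_gt0 T_le T_lt.
    exact: density_nonincreasing_on_radius A1x zA2 rho0_gt0 T_le T_lt.
have := ge0_integral_three_point_concave mu (ltW xy) (ltW yz)
  (radial_integral_ge0 k x) (radial_integral_ge0 k y) (radial_integral_ge0 k z)
  (measurable_radial_integral k x0) (measurable_radial_integral k y0)
  (measurable_radial_integral k z0) concJ.
rewrite -(fineK (Pcorrect_integral_fin_num k x0)) -(fineK (Pcorrect_integral_fin_num k y0)).
by rewrite -(fineK (Pcorrect_integral_fin_num k z0)) -!EFinM -EFinD lee_fin; exact: id.
Qed.

End Decoder.

Theorem theorem7 (R : realType) (n M : nat)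
  (d : measure_display) (Th : measurableType d)
  (mu : {measure set Th -> \bar R}) (u : Th -> 'rV[R]_n) (f : R -> Th -> R)
  (pi : 'I_M -> R) (s : 'I_M -> 'rV[R]_n) (Om : 'I_M -> set 'rV[R]_n)
  (A1 A2 : R) :
  (forall k, 0 <= pi k) -> \sum_(k < M) pi k = 1 ->
  (forall th, enorm (u th) = 1) ->
  (forall rho th, 0 <= f rho th) ->
  measurable_fun setT (fun p : R * Th => f p.1 p.2) ->
  (\int[mu]_th \int[lebesgue_measure]_(rho in [set rho : R | (0 <= rho)%R])
       (f rho th)%:E = 1)%E ->
  (forall th rho, 0 < rho -> derivable (fun r => f r th) rho 1) ->
  (forall k, measurable [set p : R * Th | Om k (s k + p.1 *: u p.2)]) ->
  (forall k l, k != l -> Om k `&` Om l = set0) ->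
  (forall k, center_convex (s k) (Om k)) ->
  0 < A1 -> A1 < A2 ->
  (forall th r, 0 < r -> (A1%:E * dmin s Om <= r%:E <= A2%:E * dmax s Om)%E ->
     derive1 (fun rho => f rho th) r <= 0) ->
  forall A, A1 <= A <= A2 ->
    (\forall x \near A, derivable (Perr mu u f pi s Om) x 1) ->
    derivable (derive1 (Perr mu u f pi s Om)) A 1 ->
    0 <= derive1 (derive1 (Perr mu u f pi s Om)) A.
Proof.
move=> pi_ge0 _ u_unit f_ge0 mf f_total f_derivable mOm _ Om_cc A1_gt0 A12 f_nonincr.
move=> A A_in dPerr dPerr'.
apply: (three_point_convex_derive2_ge0 _ A12 A_in dPerr dPerr').
apply: three_point_convex_sum => // k; apply: three_point_convex_one_minus.
exact: Pcorrect_three_point_concave.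
Qed.
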